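(* Let $\gamma_1=\gamma_2=\frac\pi4$ and for real $x_1,x_2$ with $x_1^2+x_2^2+\frac19\le1$ let $\rho(x_1,x_2)=\frac12\big(\Sigma_0+x_1\Sigma_1+x_2\Sigma_2-\frac13\Sigma_3\big)$. Then $g(\rho(x_1,x_2))>g(\rho(0,0))=\frac49$ whenever $x_1^2+x_2^2>0$. (Here $\rho(0,0)=\frac13|00\rangle\langle00|+\frac23|\psi^+\rangle\langle\psi^+|$ with $|\psi^+\rangle=\frac1{\sqrt2}(|01\rangle+|10\rangle)$, the two-qubit reduced state of the W state.)
   Context: On two qubits, let $\sigma_1,\sigma_2,\sigma_3$ denote the Pauli matrices on the first qubit and $\tau_1,\tau_2,\tau_3$ those on the second. For parameters $\gamma_1,\gamma_2$ set $u=\cos\gamma_1\cos\gamma_2$, $v=\sin\gamma_1\sin\gamma_2$, $z_1=\sin\gamma_1\cos\gamma_2$, $z_2=\cos\gamma_1\sin\gamma_2$, and define $\Sigma_0=\frac12(I+u\sigma_3+v\tau_3+z_1\sigma_1\tau_1+z_2\sigma_2\tau_2)$, $\Sigma_1=\frac12(\sin\gamma_1\sigma_1+\cos\gamma_2\tau_1+\sin\gamma_2\sigma_1\tau_3+\cos\gamma_1\sigma_3\tau_1)$, $\Sigma_2=\frac12(\sin\gamma_2\sigma_2+\cos\gamma_1\tau_2+\sin\gamma_1\sigma_2\tau_3+\cos\gamma_2\sigma_3\tau_2)$, $\Sigma_3=\frac12(v\sigma_3+u\tau_3-z_2\sigma_1\tau_1-z_1\sigma_2\tau_2+\sigma_3\tau_3)$.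 For a two-qubit density matrix $\rho$, $g(\rho):=\max\operatorname{tr}[\rho(\rho_1\otimes\rho_2)]$ over all pure single-qubit states $\rho_1,\rho_2$. *)

From Stdlib Require Import Reals Lra.
Open Scope R_scope.

Record C := mkC { Re : R ; Im : R }.
Definition C0 : C := mkC 0 0.
Definition RtoC (r : R) : C := mkC r 0.
Definition Cadd (z w : C) : C := mkC (Re z + Re w) (Im z + Im w).
Definition Cmul (z w : C) : C :=
  mkC (Re z * Re w - Im z * Im w) (Re z * Im w + Im z * Re w).
Definition Cconj (z : C) : C := mkC (Re z) (- Im z).
Definition Cnorm2 (z : C) : R := Re z * Re z + Im z * Im z.

Fixpoint Csum (n : nat) (f : nat -> C) : C :=
  match n with O => C0 | S k => Cadd (Csum k f) (f k) end.

(* Matrices: entries indexed by naturals; 2x2 use indices 0,1 and 4x4 use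
   indices 0..3 (two-qubit basis |ab> has index 2a+b, first qubit is the
   high bit). *)
Definition Mat := nat -> nat -> C.
Definition madd (A B : Mat) : Mat := fun i j => Cadd (A i j) (B i j).
Definition mscale (r : R) (A : Mat) : Mat := fun i j => Cmul (RtoC r) (A i j).
Definition mmul (n : nat) (A B : Mat) : Mat :=
  fun i j => Csum n (fun k => Cmul (A i k) (B k j)).
Definition trace (n : nat) (A : Mat) : C := Csum n (fun i => A i i).
Definition kron2 (A B : Mat) : Mat :=
  fun i j => Cmul (A (i / 2)%nat (j / 2)%nat) (B (i mod 2)%nat (j mod 2)%nat).

(* Pauli matrices: pauli 0 = I, 1 = sigma_x, 2 = sigma_y, 3 = sigma_z. *)
Definition pauli (k : nat) : Mat := fun i j =>
  match k, i, j with
  | 0%nat, 0%nat, 0%nat => RtoC 1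
  | 0%nat, 1%nat, 1%nat => RtoC 1
  | 1%nat, 0%nat, 1%nat => RtoC 1
  | 1%nat, 1%nat, 0%nat => RtoC 1
  | 2%nat, 0%nat, 1%nat => mkC 0 (-1)
  | 2%nat, 1%nat, 0%nat => mkC 0 1
  | 3%nat, 0%nat, 0%nat => RtoC 1
  | 3%nat, 1%nat, 1%nat => RtoC (-1)
  | _, _, _ => C0
  end.

Definition st (a b : nat) : Mat := kron2 (pauli a) (pauli b).

Section Sig.
Variables g1 g2 : R.
Definition u := cos g1 * cos g2.
Definition v := sin g1 * sin g2.
Definition z1 := sin g1 * cos g2.
Definition z2 := cos g1 * sin g2.

Definition Sigma0 : Mat := mscale (1/2)
  (madd (st 0 0) (madd (mscale u (st 3 0)) (madd (mscale v (st 0 3))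
   (madd (mscale z1 (st 1 1)) (mscale z2 (st 2 2)))))).
Definition Sigma1 : Mat := mscale (1/2)
  (madd (mscale (sin g1) (st 1 0)) (madd (mscale (cos g2) (st 0 1))
   (madd (mscale (sin g2) (st 1 3)) (mscale (cos g1) (st 3 1))))).
Definition Sigma2 : Mat := mscale (1/2)
  (madd (mscale (sin g2) (st 2 0)) (madd (mscale (cos g1) (st 0 2))
   (madd (mscale (sin g1) (st 2 3)) (mscale (cos g2) (st 3 2))))).
Definition Sigma3 : Mat := mscale (1/2)
  (madd (mscale v (st 3 0)) (madd (mscale u (st 0 3))
   (madd (mscale (- z2) (st 1 1)) (madd (mscale (- z1) (st 2 2)) (st 3 3))))).
End Sig.

Definition rhoW (x1 x2 : R) : Mat :=
  let g := PI / 4 in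
  mscale (1/2) (madd (Sigma0 g g) (madd (mscale x1 (Sigma1 g g))
    (madd (mscale x2 (Sigma2 g g)) (mscale (-(1/3)) (Sigma3 g g))))).

Definition qvec (a b : C) (i : nat) : C :=
  match i with 0%nat => a | 1%nat => b | _ => C0 end.
Definition proj2 (a b : C) : Mat := fun i j => Cmul (qvec a b i) (Cconj (qvec a b j)).
Definition unit_vec (a b : C) : Prop := Cnorm2 a + Cnorm2 b = 1.

(* tr[rho (rho1 (x) rho2)] for pure rho1 = |(a,b)><(a,b)|, rho2 = |(c,d)><(c,d)|.
   (The trace is real since all matrices involved are Hermitian; we take Re.) *)
Definition overlap (rho : Mat) (a b c d : C) : R :=
  Re (trace 4 (mmul 4 rho (kron2 (proj2 a b) (proj2 c d)))).

Definition is_g (rho : Mat) (m : R) : Prop :=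
  (exists a b c d, unit_vec a b /\ unit_vec c d /\ overlap rho a b c d = m) /\
  (forall a b c d, unit_vec a b -> unit_vec c d -> overlap rho a b c d <= m).

Definition ket4 (k : nat) : nat -> C := fun i => if Nat.eqb i k then RtoC 1 else C0.
Definition psiplus (i : nat) : C :=
  Cmul (RtoC (/ sqrt 2)) (Cadd (ket4 1 i) (ket4 2 i)).
Definition Wred : Mat := fun i j =>
  Cadd (Cmul (RtoC (1/3)) (Cmul (ket4 0 i) (Cconj (ket4 0 j))))
       (Cmul (RtoC (2/3)) (Cmul (psiplus i) (Cconj (psiplus j)))).

(* Writing the pure qubit states rho1, rho2 through their Bloch vectors
   n, k on the unit sphere, the overlap tr[rho (rho1 (x) rho2)] of
   rho(x1,x2) equals 1/4 F(n,k) for an explicit polynomial F, bilinear in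
   (1,n) and (1,k) (lemma [overlap_pure]).  For (x1,x2) = 0 a sum of squares
   shows F <= 16/9 with equality at n = k = (sqrt(8/9),0,1/3), so
   g(rho(0,0)) = 4/9.  For (x1,x2) = r (e1,e2) with r > 0 we maximise F in
   two steps: for a fixed latitude n3 = c, Cauchy-Schwarz (first in k, then
   in the horizontal part of n) bounds F by an explicit continuous function
   h(c) on [-1,1], and this bound is attained.  The extreme value theorem on
   [-1,1] then provides the maximum g = h(cmax)/4, and evaluating the bound at
   c = 1/3 gives h(cmax) >= h(1/3) > 16/9, whence g(rho(x1,x2)) > 4/9.
   The file proves, in order: rho(0,0) is the W reduced state; the Bloch
   parametrisation of pure states; the overlap formula; the latitude-wise
   maximisation; the two values of g; and finally the theorem. *)

From Pilot Require Import Defs.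
From Stdlib Require Import Reals Lra Lia.
Open Scope R_scope.

Lemma inv_sqrt2_sq : 1 / sqrt 2 * (1 / sqrt 2) = / 2.
Proof.
  replace (1 / sqrt 2 * (1 / sqrt 2)) with (/ (sqrt 2 * sqrt 2))
    by (field; exact sqrt2_neq_0).
  rewrite sqrt_sqrt; lra.
Qed.

Lemma C_ext (z w : Defs.C) : Re z = Re w -> Im z = Im w -> z = w.
Proof. destruct z, w; simpl; intros -> ->; reflexivity. Qed.

Lemma rhoW00_Wred (i j : nat) :
  (i < 4)%nat -> (j < 4)%nat -> rhoW 0 0 i j = Wred i j.
Proof.
  intros Hi Hj.
  assert (Hinv : (/ sqrt 2) ^ 2 = / 2).
  { rewrite <- inv_sqrt2_sq. field. exact sqrt2_neq_0. }
  unfold rhoW, Sigma0, Sigma1, Sigma2, Sigma3, u, v, z1, z2.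
  rewrite sin_PI4, cos_PI4, inv_sqrt2_sq.
  unfold Wred, psiplus, ket4, kron2, st, madd, mscale.
  destruct i as [|[|[|[|i]]]]; try lia; destruct j as [|[|[|[|j]]]]; try lia;
    apply C_ext; simpl; ring_simplify; try rewrite Hinv; field.
Qed.

(* Bloch coordinates of the (unnormalised) qubit state |(a,b)><(a,b)|:
   it equals 1/2 (bloch0 I + bloch1 sigma_x + bloch2 sigma_y + bloch3 sigma_z). *)
Definition bloch0 (a b : Defs.C) : R := Cnorm2 a + Cnorm2 b.
Definition bloch1 (a b : Defs.C) : R := 2 * (Re a * Re b + Im a * Im b).
Definition bloch2 (a b : Defs.C) : R := 2 * (Re a * Im b - Im a * Re b).
Definition bloch3 (a b : Defs.C) : R := Cnorm2 a - Cnorm2 b.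

Lemma bloch_sphere (a b : Defs.C) : unit_vec a b ->
  bloch0 a b = 1 /\
  bloch1 a b * bloch1 a b + bloch2 a b * bloch2 a b + bloch3 a b * bloch3 a b = 1.
Proof.
  unfold unit_vec; intros Hab. split; [exact Hab|].
  transitivity ((Cnorm2 a + Cnorm2 b) * (Cnorm2 a + Cnorm2 b)).
  - destruct a, b; unfold bloch1, bloch2, bloch3, Cnorm2; simpl; ring.
  - rewrite Hab; ring.
Qed.

(* Conversely every point of the unit sphere is the Bloch vector of a pure
   state, so maximising over pure states is maximising over the sphere. *)
Lemma bloch_surjective (n1 n2 n3 : R) : n1 * n1 + n2 * n2 + n3 * n3 = 1 ->
  exists a b, unit_vec a b /\
    bloch1 a b = n1 /\ bloch2 a b = n2 /\ bloch3 a b = n3.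
Proof.
  intros Hn.
  destruct (Rle_lt_or_eq_dec (-1) n3) as [Hlt|Heq]; [nra| |].
  - (* a = sqrt((1+n3)/2) > 0 and b = (n1 + i n2)/(2a) *)
    set (al := sqrt ((1 + n3) / 2)).
    assert (Hal : al * al = (1 + n3) / 2) by (apply sqrt_sqrt; lra).
    assert (Hal0 : 0 < al) by (apply sqrt_lt_R0; lra).
    assert (Hhor : n1 * n1 + n2 * n2 = (1 - n3) * (1 + n3)) by lra.
    exists (mkC al 0), (mkC (n1 / (2 * al)) (n2 / (2 * al))).
    unfold unit_vec, bloch1, bloch2, bloch3, Cnorm2; simpl.
    split; [|split; [|split]].
    + replace (al * al + 0 * 0 + (n1 / (2 * al) * (n1 / (2 * al))
                 + n2 / (2 * al) * (n2 / (2 * al))))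
        with (al * al + (n1 * n1 + n2 * n2) / (4 * (al * al))) by (field; lra).
      rewrite Hal, Hhor. field. lra.
    + field. lra.
    + field. lra.
    + replace (al * al + 0 * 0 - (n1 / (2 * al) * (n1 / (2 * al))
                 + n2 / (2 * al) * (n2 / (2 * al))))
        with (al * al - (n1 * n1 + n2 * n2) / (4 * (al * al))) by (field; lra).
      rewrite Hal, Hhor. field. lra.
  - (* the south pole is |1> *)
    subst n3. replace n1 with 0 by nra. replace n2 with 0 by nra.
    exists (mkC 0 0), (mkC 1 0). unfold unit_vec, bloch1, bloch2, bloch3, Cnorm2; simpl.
    repeat split; ring.
Qed.

(* The overlap of rho(x1,x2) with |a,b><a,b| (x) |c,d><c,d| as a bilinear
   form in the Bloch vectors (n0,n) and (k0,k); here s = sin(pi/4). *)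
Definition bloch_form (s x1 x2 n0 n1 n2 n3 k0 k1 k2 k3 : R) : R :=
  n0 * k0 + / 3 * (n3 * k0 + n0 * k3) + 2 / 3 * (n1 * k1 + n2 * k2) - / 3 * n3 * k3
  + s * x1 * (n1 * k0 + n0 * k1 + n1 * k3 + n3 * k1)
  + s * x2 * (n2 * k0 + n0 * k2 + n2 * k3 + n3 * k2).

Lemma overlap_bloch (x1 x2 : R) (a b c d : Defs.C) :
  overlap (rhoW x1 x2) a b c d =
  / 4 * bloch_form (1 / sqrt 2) x1 x2
          (bloch0 a b) (bloch1 a b) (bloch2 a b) (bloch3 a b)
          (bloch0 c d) (bloch1 c d) (bloch2 c d) (bloch3 c d).
Proof.
  destruct a as [ar ai], b as [br bi], c as [cr ci], d as [dr di].
  unfold overlap, rhoW, Sigma0, Sigma1, Sigma2, Sigma3, u, v, z1, z2.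
  rewrite sin_PI4, cos_PI4, inv_sqrt2_sq.
  generalize (1 / sqrt 2); intros s.
  unfold trace, mmul, kron2, st, proj2, madd, mscale, bloch_form,
    bloch0, bloch1, bloch2, bloch3, Cnorm2.
  simpl. field.
Qed.

Lemma overlap_pure (x1 x2 : R) (a b c d : Defs.C) :
  unit_vec a b -> unit_vec c d ->
  overlap (rhoW x1 x2) a b c d =
  / 4 * bloch_form (1 / sqrt 2) x1 x2
          1 (bloch1 a b) (bloch2 a b) (bloch3 a b)
          1 (bloch1 c d) (bloch2 c d) (bloch3 c d).
Proof.
  intros Hab Hcd. rewrite overlap_bloch.
  destruct (bloch_sphere a b Hab) as [-> _].
  destruct (bloch_sphere c d Hcd) as [-> _]. reflexivity.
Qed.

Lemma dot3_le_norm (w1 w2 w3 k1 k2 k3 : R) :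
  k1 * k1 + k2 * k2 + k3 * k3 = 1 ->
  w1 * k1 + w2 * k2 + w3 * k3 <= sqrt (w1 * w1 + w2 * w2 + w3 * w3).
Proof.
  intros Hk.
  assert (Hsq : (w1 * k1 + w2 * k2 + w3 * k3)² <= w1 * w1 + w2 * w2 + w3 * w3).
  {
    assert (Hlag : (w1 * k1 + w2 * k2 + w3 * k3) * (w1 * k1 + w2 * k2 + w3 * k3)
      + ((w1 * k2 - w2 * k1)² + (w1 * k3 - w3 * k1)² + (w2 * k3 - w3 * k2)²)
      = (w1 * w1 + w2 * w2 + w3 * w3) * (k1 * k1 + k2 * k2 + k3 * k3))
      by (unfold Rsqr; ring).
    rewrite Hk in Hlag. unfold Rsqr at 1.
    pose proof (Rle_0_sqr (w1 * k2 - w2 * k1)).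
    pose proof (Rle_0_sqr (w1 * k3 - w3 * k1)).
    pose proof (Rle_0_sqr (w2 * k3 - w3 * k2)). lra. }
  apply sqrt_le_1_alt in Hsq. rewrite sqrt_Rsqr_abs in Hsq.
  exact (Rle_trans _ _ _ (Rle_abs _) Hsq).
Qed.

Definition hradius (c : R) : R := sqrt (1 - c * c).

Lemma hradius_spec (c : R) : -1 <= c <= 1 ->
  0 <= hradius c /\ hradius c * hradius c = 1 - c * c.
Proof. intros. unfold hradius. split; [apply sqrt_pos | apply sqrt_sqrt; nra]. Qed.

Lemma hradius_continuous (c : R) : -1 <= c <= 1 -> continuity_pt hradius c.
Proof.
  intros Hc. unfold hradius.
  apply (continuity_pt_comp (fun y => 1 - y * y) sqrt).
  - apply continuity_pt_minus; [apply continuity_pt_const; now intros ? ?|].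
    apply continuity_pt_mult; apply derivable_continuous_pt, derivable_pt_id.
  - apply continuity_pt_sqrt; nra.
Qed.

(* Maximisation of the form for (x1,x2) = r (e1,e2), r > 0, |e| = 1. *)
Section LatitudeMaximum.
Variables s r e1 e2 : R.
Hypothesis s_pos : 0 < s.
Hypothesis r_pos : 0 < r.
Hypothesis e_unit : e1 * e1 + e2 * e2 = 1.

(* The maximum of the form over n on latitude c (with the optimal horizontal
   direction n_h = hradius c . e) and over all k is
   1 + c/3 + s r hradius(c) + sqrt (P c ^2 + Q c ^2). *)
Definition Plat (c : R) : R := 2 / 3 * hradius c + s * r * (1 + c).
Definition Qlat (c : R) : R := / 3 * (1 - c) + s * r * hradius c.
Definition hmax (c : R) : R :=
  1 + / 3 * c + s * r * hradius c + sqrt (Plat c * Plat c + Qlat c * Qlat c).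

(* For fixed n the form is affine in k with linear part w(n).k. *)
Definition w1 (n1 n3 : R) : R := 2 / 3 * n1 + s * r * e1 * (1 + n3).
Definition w2 (n2 n3 : R) : R := 2 / 3 * n2 + s * r * e2 * (1 + n3).
Definition w3 (n1 n2 n3 : R) : R := / 3 * (1 - n3) + s * r * (e1 * n1 + e2 * n2).

Lemma bloch_form_affine_k (n1 n2 n3 k1 k2 k3 : R) :
  bloch_form s (r * e1) (r * e2) 1 n1 n2 n3 1 k1 k2 k3 =
  1 + n3 / 3 + s * r * (e1 * n1 + e2 * n2)
  + (w1 n1 n3 * k1 + w2 n2 n3 * k2 + w3 n1 n2 n3 * k3).
Proof. unfold bloch_form, w1, w2, w3. field. Qed.

Lemma horizontal_alignment (n1 n2 n3 : R) :
  n1 * n1 + n2 * n2 + n3 * n3 = 1 ->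
  - hradius n3 <= e1 * n1 + e2 * n2 <= hradius n3.
Proof.
  intros Hn. assert (Hc : -1 <= n3 <= 1) by nra.
  destruct (hradius_spec n3 Hc) as [Hh0 Hh].
  assert (Hlag : (e1 * n1 + e2 * n2) * (e1 * n1 + e2 * n2) + (e1 * n2 - e2 * n1) * (e1 * n2 - e2 * n1)
    = (e1 * e1 + e2 * e2) * (n1 * n1 + n2 * n2)) by ring.
  rewrite e_unit in Hlag. pose proof (Rle_0_sqr (e1 * n2 - e2 * n1)) as Hsq.
  unfold Rsqr in Hsq.
  assert (Ht2 : (e1 * n1 + e2 * n2) * (e1 * n1 + e2 * n2) <= hradius n3 * hradius n3) by lra.
  split; nra.
Qed.

Lemma wnorm_le (n1 n2 n3 : R) :
  n1 * n1 + n2 * n2 + n3 * n3 = 1 ->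
  w1 n1 n3 * w1 n1 n3 + w2 n2 n3 * w2 n2 n3 + w3 n1 n2 n3 * w3 n1 n2 n3
  <= Plat n3 * Plat n3 + Qlat n3 * Qlat n3.
Proof.
  intros Hn. assert (Hc : -1 <= n3 <= 1) by nra.
  destruct (hradius_spec n3 Hc) as [Hh0 Hh].
  pose proof (horizontal_alignment n1 n2 n3 Hn) as Ht.
  set (h := hradius n3) in *. set (t := e1 * n1 + e2 * n2) in *.
  (* the gap is a sum of two products of nonnegative factors *)
  assert (Hgap : Plat n3 * Plat n3 + Qlat n3 * Qlat n3
      - (w1 n1 n3 * w1 n1 n3 + w2 n2 n3 * w2 n2 n3 + w3 n1 n2 n3 * w3 n1 n2 n3)
    = 4 / 3 * s * r * (1 + n3) * (h - t)
      + (s * r * (h - t)) * (2 / 3 * (1 - n3) + s * r * (h + t))).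
  { assert (Hnh : n1 * n1 + n2 * n2 = h * h) by lra.
    unfold Plat, Qlat, w1, w2, w3; fold h t.
    transitivity ((4 / 9 * (h * h) + 4 / 3 * s * r * (1 + n3) * h + s * s * r * r * (1 + n3) * (1 + n3)
        + (/ 3 * (1 - n3) + s * r * h) * (/ 3 * (1 - n3) + s * r * h))
      - (4 / 9 * (n1 * n1 + n2 * n2) + 4 / 3 * s * r * (1 + n3) * t
         + s * s * r * r * (1 + n3) * (1 + n3) * (e1 * e1 + e2 * e2)
         + (/ 3 * (1 - n3) + s * r * t) * (/ 3 * (1 - n3) + s * r * t))).
    - unfold t; field.
    - rewrite Hnh, e_unit. field. }
  assert (0 <= 4 / 3 * s * r * (1 + n3) * (h - t)) by (repeat apply Rmult_le_pos; lra).
  assert (0 <= s * r * (h + t)) by (repeat apply Rmult_le_pos; lra).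
  assert (0 <= (s * r * (h - t)) * (2 / 3 * (1 - n3) + s * r * (h + t))) by (apply Rmult_le_pos; [repeat apply Rmult_le_pos|]; lra).
  lra.
Qed.

Lemma bloch_form_le_hmax (n1 n2 n3 k1 k2 k3 : R) :
  n1 * n1 + n2 * n2 + n3 * n3 = 1 -> k1 * k1 + k2 * k2 + k3 * k3 = 1 ->
  bloch_form s (r * e1) (r * e2) 1 n1 n2 n3 1 k1 k2 k3 <= hmax n3.
Proof.
  intros Hn Hk.
  rewrite bloch_form_affine_k. unfold hmax.
  pose proof (dot3_le_norm (w1 n1 n3) (w2 n2 n3) (w3 n1 n2 n3) k1 k2 k3 Hk) as Hwk.
  pose proof (sqrt_le_1_alt _ _ (wnorm_le n1 n2 n3 Hn)) as Hw.
  pose proof (horizontal_alignment n1 n2 n3 Hn) as Ht.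
  assert (s * r * (e1 * n1 + e2 * n2) <= s * r * hradius n3) by (apply Rmult_le_compat_l; nra).
  lra.
Qed.

(* The bound is attained on every latitude, at n = (hradius c . e, c)
   and k = w(n)/|w(n)|. *)
Lemma hmax_attained (c : R) : -1 <= c <= 1 ->
  exists n1 n2 n3 k1 k2 k3,
    n1 * n1 + n2 * n2 + n3 * n3 = 1 /\ k1 * k1 + k2 * k2 + k3 * k3 = 1 /\
    bloch_form s (r * e1) (r * e2) 1 n1 n2 n3 1 k1 k2 k3 = hmax c.
Proof.
  intros Hc.
  destruct (hradius_spec c Hc) as [Hh0 Hh].
  assert (HP0 : s * r * (1 + c) <= Plat c) by (unfold Plat; lra).
  assert (HQ0 : / 3 * (1 - c) <= Qlat c).
  { unfold Qlat. assert (0 <= s * r * hradius c) by (repeat apply Rmult_le_pos; lra). lra. }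
  unfold hmax.
  set (P := Plat c) in *. set (Q := Qlat c) in *. set (h := hradius c) in *.
  assert (HPQ : 0 < P * P + Q * Q).
  { destruct (Rle_lt_or_eq_dec c 1) as [Hlt|Heq]; [lra| |].
    - assert (0 < Q * Q) by (apply Rmult_lt_0_compat; lra). nra.
    - assert (0 < s * r * (1 + c)) by (repeat apply Rmult_lt_0_compat; lra). nra. }
  set (L := sqrt (P * P + Q * Q)).
  assert (HL : L * L = P * P + Q * Q) by (apply sqrt_sqrt; lra).
  assert (HL0 : 0 < L) by (apply sqrt_lt_R0; lra).
  assert (HPd : P = 2 / 3 * h + s * r * (1 + c)) by reflexivity.
  assert (HQd : Q = / 3 * (1 - c) + s * r * h) by reflexivity.
  clearbody L P Q h.
  exists (h * e1), (h * e2), c, (P * e1 / L), (P * e2 / L), (Q / L).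
  split; [|split].
  - replace (h * e1 * (h * e1) + h * e2 * (h * e2) + c * c)
      with (h * h * (e1 * e1 + e2 * e2) + c * c) by ring.
    rewrite e_unit, Hh. ring.
  - replace (P * e1 / L * (P * e1 / L) + P * e2 / L * (P * e2 / L) + Q / L * (Q / L))
      with ((P * P * (e1 * e1 + e2 * e2) + Q * Q) / (L * L)) by (field; lra).
    rewrite e_unit, HL. field. lra.
  - transitivity (1 + / 3 * c + s * r * h * (e1 * e1 + e2 * e2)
        + (P * P * (e1 * e1 + e2 * e2) + (/ 3 * (1 - c) + s * r * h * (e1 * e1 + e2 * e2)) * Q) / L).
    + unfold bloch_form. rewrite HPd, HQd. field. lra.
    + rewrite e_unit.
      replace (/ 3 * (1 - c) + s * r * h * 1) with Q by (rewrite HQd; ring).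
      replace (P * P * 1 + Q * Q) with (L * L) by (rewrite HL; ring).
      field. lra.
Qed.

Lemma hmax_continuous (c : R) : -1 <= c <= 1 -> continuity_pt hmax c.
Proof.
  intros Hc.
  pose proof (hradius_continuous c Hc) as Hh.
  (* hmax is built from id, constants and hradius by +, * and sqrt *)
  change hmax with
    (fct_cte 1 + fct_cte (/ 3) * id + fct_cte (s * r) * hradius
     + comp sqrt ((fct_cte (2 / 3) * hradius + fct_cte (s * r) * (fct_cte 1 + id))
                  * (fct_cte (2 / 3) * hradius + fct_cte (s * r) * (fct_cte 1 + id))
                + (fct_cte (/ 3) * (fct_cte 1 - id) + fct_cte (s * r) * hradius)
                  * (fct_cte (/ 3) * (fct_cte 1 - id) + fct_cte (s * r) * hradius)))%F.
  apply continuity_pt_plus; [|apply continuity_pt_comp; [|apply continuity_pt_sqrt]].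
  1, 2: repeat first
    [ exact Hh
    | apply derivable_continuous_pt, derivable_pt_id
    | apply continuity_pt_const; intros ? ?; reflexivity
    | apply continuity_pt_minus | apply continuity_pt_plus | apply continuity_pt_mult ].
  unfold plus_fct, mult_fct, minus_fct, fct_cte, id.
  pose proof (Rle_0_sqr (2 / 3 * hradius c + s * r * (1 + c))).
  pose proof (Rle_0_sqr (/ 3 * (1 - c) + s * r * hradius c)).
  unfold Rsqr in *. lra.
Qed.

(* Tilting the W optimum n = k = (sqrt(8/9) e, 1/3) towards e strictly
   increases the form, so the latitude maximum at 1/3 exceeds 16/9. *)
Lemma hmax_third_gt : 16 / 9 < hmax (/ 3).
Proof.
  set (h0 := sqrt (8 / 9)).
  assert (Hh : h0 * h0 = 8 / 9) by (apply sqrt_sqrt; lra).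
  assert (Hh0 : 0 < h0) by (apply sqrt_lt_R0; lra).
  assert (Hn : h0 * e1 * (h0 * e1) + h0 * e2 * (h0 * e2) + / 3 * / 3 = 1).
  { replace (h0 * e1 * (h0 * e1) + h0 * e2 * (h0 * e2) + / 3 * / 3)
      with (h0 * h0 * (e1 * e1 + e2 * e2) + / 9) by field.
    rewrite e_unit, Hh. field. }
  pose proof (bloch_form_le_hmax _ _ _ _ _ _ Hn Hn) as Hb.
  assert (Hval :
    bloch_form s (r * e1) (r * e2) 1 (h0 * e1) (h0 * e2) (/ 3) 1 (h0 * e1) (h0 * e2) (/ 3)
    = 1 + 2 / 9 + 2 / 3 * (h0 * h0) * (e1 * e1 + e2 * e2) - / 27
      + 8 / 3 * s * r * h0 * (e1 * e1 + e2 * e2))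
    by (unfold bloch_form; field).
  rewrite e_unit, Hh in Hval.
  assert (0 < s * r * h0) by (repeat apply Rmult_lt_0_compat; lra).
  lra.
Qed.

End LatitudeMaximum.

Lemma bloch_form_unperturbed_le (s n1 n2 n3 k1 k2 k3 : R) :
  n1 * n1 + n2 * n2 + n3 * n3 = 1 -> k1 * k1 + k2 * k2 + k3 * k3 = 1 ->
  bloch_form s 0 0 1 n1 n2 n3 1 k1 k2 k3 <= 16 / 9.
Proof.
  intros Hn Hk. unfold bloch_form.
  pose proof (Rle_0_sqr (n1 - k1)). pose proof (Rle_0_sqr (n2 - k2)).
  pose proof (Rle_0_sqr (n3 - / 3 + (k3 - / 3) / 2)). pose proof (Rle_0_sqr (k3 - / 3)).
  unfold Rsqr in *. nra.
Qed.

(* g(rho(0,0)) = 4/9, attained at rho1 = rho2 with Bloch vector (sqrt(8/9),0,1/3). *)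
Lemma g_rhoW00 : is_g (rhoW 0 0) (4 / 9).
Proof.
  set (h0 := sqrt (8 / 9)).
  assert (Hh : h0 * h0 = 8 / 9) by (apply sqrt_sqrt; lra).
  split.
  - assert (Hn : h0 * h0 + 0 * 0 + / 3 * / 3 = 1) by (rewrite Hh; field).
    destruct (bloch_surjective _ _ _ Hn) as (a & b & Hab & E1 & E2 & E3).
    exists a, b, a, b. split; [exact Hab|split; [exact Hab|]].
    rewrite overlap_pure, E1, E2, E3 by exact Hab.
    transitivity (/ 4 * (1 + 2 / 9 + 2 / 3 * (h0 * h0) - / 27)).
    + unfold bloch_form. field. exact sqrt2_neq_0.
    + rewrite Hh. field.
  - intros a b c d Hab Hcd. rewrite overlap_pure by assumption.
    destruct (bloch_sphere a b Hab) as [_ Hn]. destruct (bloch_sphere c d Hcd) as [_ Hk].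
    pose proof (bloch_form_unperturbed_le (1 / sqrt 2) _ _ _ _ _ _ Hn Hk). lra.
Qed.

(* For a nonzero perturbation r e, g exists (extreme value theorem applied
   to hmax on [-1,1]) and is strictly larger than 4/9. *)
Lemma g_rhoW_perturbed (r e1 e2 : R) :
  0 < r -> e1 * e1 + e2 * e2 = 1 ->
  exists m, is_g (rhoW (r * e1) (r * e2)) m /\ m > 4 / 9.
Proof.
  intros Hr He.
  set (s := 1 / sqrt 2).
  assert (Hs : 0 < s) by (apply Rdiv_lt_0_compat; [lra | apply sqrt_lt_R0; lra]).
  destruct (continuity_ab_maj (hmax s r) (-1) 1 ltac:(lra)
              (hmax_continuous s r)) as [cm [Hmax Hcm]].
  exists (hmax s r cm / 4). split; [split|].
  - destruct (hmax_attained s r e1 e2 Hs Hr He cm Hcm)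
      as (n1 & n2 & n3 & k1 & k2 & k3 & Hn & Hk & HF).
    destruct (bloch_surjective _ _ _ Hn) as (a & b & Hab & E1 & E2 & E3).
    destruct (bloch_surjective _ _ _ Hk) as (c & d & Hcd & F1 & F2 & F3).
    exists a, b, c, d. split; [exact Hab|split; [exact Hcd|]].
    rewrite overlap_pure, E1, E2, E3, F1, F2, F3 by assumption.
    fold s. rewrite HF. field.
  - intros a b c d Hab Hcd. rewrite overlap_pure by assumption. fold s.
    destruct (bloch_sphere a b Hab) as [_ Hn]. destruct (bloch_sphere c d Hcd) as [_ Hk].
    pose proof (bloch_form_le_hmax s r e1 e2 Hs Hr He _ _ _ _ _ _ Hn Hk) as Hb.
    pose proof (Hmax (bloch3 a b) ltac:(nra)). lra.
  - pose proof (hmax_third_gt s r e1 e2 Hs Hr He).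
    pose proof (Hmax (/ 3) ltac:(lra)). lra.
Qed.

Lemma polar_decomposition (x1 x2 : R) : x1 ^ 2 + x2 ^ 2 > 0 ->
  exists r e1 e2, 0 < r /\ e1 * e1 + e2 * e2 = 1 /\ x1 = r * e1 /\ x2 = r * e2.
Proof.
  intros Hx.
  set (r := sqrt (x1 ^ 2 + x2 ^ 2)).
  assert (Hr : r * r = x1 ^ 2 + x2 ^ 2) by (apply sqrt_sqrt; lra).
  assert (Hr0 : 0 < r) by (apply sqrt_lt_R0; lra).
  exists r, (x1 / r), (x2 / r). split; [lra|split; [|split]].
  - replace (x1 / r * (x1 / r) + x2 / r * (x2 / r)) with ((x1 ^ 2 + x2 ^ 2) / (r * r))
      by (field; lra).
    rewrite Hr. field. lra.
  - field. lra.
  - field. lra.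
Qed.

Theorem mainTheorem6 :
  (forall i j : nat, (i < 4)%nat -> (j < 4)%nat -> rhoW 0 0 i j = Wred i j) /\
  (forall x1 x2 : R,
     x1 ^ 2 + x2 ^ 2 + 1 / 9 <= 1 ->
     x1 ^ 2 + x2 ^ 2 > 0 ->
     exists m m0 : R,
       is_g (rhoW x1 x2) m /\ is_g (rhoW 0 0) m0 /\ m0 = 4 / 9 /\ m > m0).
Proof.
  split; [exact rhoW00_Wred|].
  intros x1 x2 _ Hx.
  destruct (polar_decomposition x1 x2 Hx) as (r & e1 & e2 & Hr & He & -> & ->).
  destruct (g_rhoW_perturbed r e1 e2 Hr He) as (m & Hm & Hgt).
  exists m, (4 / 9). split; [exact Hm|split; [exact g_rhoW00|split; [reflexivity|exact Hgt]]].
Qed.
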